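(* Let $(k_1,\dots,k_n) \in \mathbb{Z}_{\geq 1}^n$ and $i \in \mathbb{Z}_{\geq 2}$. Then $$\dim_{\mathbb{F}_2} \widetilde{\mathrm{Gov}}(V_{[k_1,\dots,k_n]}, i) = (k_1+\dots+k_n)\binom{n-1}{i-1} - \binom{n}{i}.$$
   Context: Let $m = k_1+\dots+k_n$, $V_{[k_1,\dots,k_n]} = \mathbb{F}_2^m$ with basis $e_1,\dots,e_m$ and dual basis $\chi_1,\dots,\chi_m$. For $h \in [n]$ let $f(h) = \{k_1+\dots+k_{h-1}+1,\dots,k_1+\dots+k_h\}$ (the $h$-th block), and for a subset $T \subseteq [m]$ put $f(T) = T$. For $A \subseteq [n]$ with $\#A = i \geq 2$, $x \in A$ and $T \subseteq f(x)$, regard $T$ as a new symbol and set $$\widetilde{\phi}_{(A,T)} = \sum_{\tau} \Big(\sum_{y_1 \in f(\tau(1))}\chi_{y_1}\Big)\otimes\cdots\otimes\Big(\sum_{y_i \in f(\tau(i))}\chi_{y_i}\Big),$$ the sum over bijections $\tau:\{1,\dots,i\} \to (A\setminus\{x\})\cup\{T\}$ with $\tau(i-1) = T$ or $\tau(i) = T$; here $\psi_1\otimes\cdots\otimes\psi_i$ denotes the multilinear map $(\sigma_1,\dots,\sigma_i)\mapsto\prod_s\psi_s(\sigma_s)$ on $(\mathbb{F}_2^m)^i$. $\widetilde{\mathrm{Gov}}(V_{[k_1,\dots,k_n]}, i)$ is the span of all $\widetilde{\phi}_{(A,T)}$ with $A \subseteq [n]$, $\#A = i$, $x \in A$, $T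 \subseteq f(x)$. *)

From HB Require Import structures.
From mathcomp Require Import all_boot all_order all_algebra.
Unset Strict Implicit.
Unset Printing Implicit Defensive.
Import GRing.Theory.
Local Open Scope ring_scope.

(* m = k_1 + ... + k_n ; blocks are 0-indexed: block h (h : 'I_n) is
   { j : 'I_m | k_0 + ... + k_{h-1} <= j < k_0 + ... + k_h }. *)
Definition msum {n : nat} (k : 'I_n -> nat) : nat := (\sum_(l < n) k l)%N.

Definition block {n : nat} (k : 'I_n -> nat) (h : 'I_n) : {set 'I_(msum k)} :=
  [set j : 'I_(msum k) | ((\sum_(l < n | (l < h)%N) k l)%N <= j)%N
                         && (j < (\sum_(l < n | (l <= h)%N) k l)%N)%N].

(* Labels: Some h stands for the block index h, None for the new symbol T. *)
Definition lblock {n : nat} (k : 'I_n -> nat) (T : {set 'I_(msum k)})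
  (a : option 'I_n) : {set 'I_(msum k)} :=
  if a is Some h then block k h else T.

Definition chiS {m : nat} (B : {set 'I_m}) (v : 'rV['F_2]_m) : 'F_2 :=
  \sum_(y in B) v ord0 y.

(* Multilinear maps (F_2^m)^i -> F_2, as functions on i-tuples of vectors. *)
Definition mlmap (m i : nat) := {ffun {ffun 'I_i -> 'rV['F_2]_m} -> ('F_2)^o}.

(* bijections tau : {1..i} -> (A \ {x}) u {T} with T in position i-1 or i
   (0-indexed positions i-2, i-1) *)
Definition good_tau {n i : nat} (A : {set 'I_n}) (x : 'I_n)
  (tau : {ffun 'I_i -> option 'I_n}) : bool :=
  [&& injectiveb tau,
      [set tau p | p : 'I_i] == (None |: (Some @: (A :\ x))) &
      [forall p : 'I_i, (tau p == None) ==> (i.-2 <= p)%N]].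

Definition phi_tilde {n : nat} (k : 'I_n -> nat) (i : nat)
  (A : {set 'I_n}) (x : 'I_n) (T : {set 'I_(msum k)}) : mlmap (msum k) i :=
  [ffun sigma : {ffun 'I_i -> 'rV['F_2]_(msum k)} =>
     \sum_(tau : {ffun 'I_i -> option 'I_n} | good_tau A x tau)
        \prod_(s < i) chiS (lblock k T (tau s)) (sigma s)].

Definition Gov_tilde {n : nat} (k : 'I_n -> nat) (i : nat)
  : {vspace mlmap (msum k) i} :=
  (\sum_(A : {set 'I_n} | #|A| == i)
     \sum_(x in A)
       \sum_(T : {set 'I_(msum k)} | T \subset block k x)
         <[phi_tilde k i A x T]>)%VS.

From HB Require Import structures.
From mathcomp Require Import all_boot all_order all_algebra.
From mathcomp Require Import perm zify.
Set Implicit Arguments.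
Unset Strict Implicit.
Unset Printing Implicit Defensive.
Import GRing.Theory.
Local Open Scope ring_scope.

(* Since phi~(A, x, T) is additive in T, Gov~ is spanned by the phi~(A, x, {y})
   with y in the block of x.  Putting x back in place of the new symbol turns
   the bijections tau in phi~(A, x, block x) into the bijections
   sigma : [i] -> A with x at one of the last two positions, so in
   sum_(x in A) phi~(A, x, block x) every sigma occurs twice and the sum
   vanishes over F_2.  For #|A| = i this is the only relation: once one point
   y0(A) is dropped, the remaining generators are independent, because the
   evaluation at the tuple of unit vectors e_z, with z ending in two points u, v
   of different blocks and otherwise meeting every other block of A once, sees
   exactly the generators (A, u) and (A, v).  Hence the dimension is
   sum_(#|A| = i) (sum_(x in A) k_x - 1) = m 'C(n-1, i-1) - 'C(n, i). *)

Lemma exists_ord_bijection2 (T : finType) (A : {set T}) (i : nat)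
    (a b : 'I_i) (u v : T) :
  #|A| = i -> u \in A -> v \in A -> u != v -> a != b ->
  exists2 f : 'I_i -> T, injective f & [/\ [set f s | s : 'I_i] = A, f a = u & f b = v].
Proof.
move=> cardA uA vA uv ab.
pose e s := enum_val (cast_ord (esym cardA) s).
have e_inj : injective e by move=> s1 s2 /enum_val_inj /cast_ord_inj.
have e_im : [set e s | s : 'I_i] = A.
  apply/eqP; rewrite eqEcard card_imset // card_ord cardA leqnn andbT.
  by apply/subsetP => _ /imsetP[s _ ->]; apply: enum_valP.
have /imsetP[a' _ ea'] : u \in [set e s | s : 'I_i] by rewrite e_im.
have /imsetP[b' _ eb'] : v \in [set e s | s : 'I_i] by rewrite e_im.
pose p := tperm a a'; pose q := tperm (p b) b'.
have f_inj : injective (fun s => e (q (p s))) by move=> s1 s2 /e_inj/perm_inj/perm_inj.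
exists (fun s => e (q (p s))) => //; split.
- apply/eqP; rewrite -e_im eqEcard !card_imset // leqnn andbT.
  by apply/subsetP => _ /imsetP[s _ ->]; apply: imset_f.
- have a'b' : a' != b' by apply: contraNneq uv => e_ab; rewrite ea' eb' e_ab.
  have pb_a' : p b != a' by rewrite -[a' in _ != a'](tpermL a a') (inj_eq perm_inj) eq_sym.
  by rewrite /p tpermL /q tpermD // eq_sym.
- by rewrite /q tpermL eb'.
Qed.

Lemma card_subsets_containing (T : finType) (x : T) j :
  #|[set A : {set T} | #|A| == j.+1 & x \in A]| = 'C(#|T|.-1, j).
Proof.
rewrite -(cardsC1 x) -cards_draws.
pose D := [set B : {set T} | B \subset [set~ x] & #|B| == j].
have x_notin B : B \in D -> x \notin B.
  by rewrite inE => /andP[/subsetP sBx _]; apply/negP => /sBx; rewrite !inE eqxx.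
have add_x_inj : {in D &, injective (fun B => x |: B)}.
  by move=> B1 B2 D1 D2 eB; rewrite -(setU1K (x_notin _ D1)) eB setU1K ?x_notin.
rewrite -(card_in_imset add_x_inj); apply: eq_card => A; rewrite !inE.
apply/andP/imsetP => [[/eqP cardA xA] | [B DB ->]].
  exists (A :\ x); last by rewrite setD1K.
  by rewrite inE subsetDr /=; have := cardsD1 x A; rewrite xA cardA => -[->].
by rewrite cardsU1 x_notin // setU11; move: DB; rewrite inE => /andP[_ /eqP ->].
Qed.

Lemma sum_subsets_weight (T : finType) (w : T -> nat) j :
  (\sum_(A : {set T} | #|A| == j.+1) \sum_(x in A) w x =
   (\sum_x w x) * 'C(#|T|.-1, j))%N.
Proof.
rewrite (exchange_big_dep xpredT) //= big_distrl /=; apply: eq_bigr => x _.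
rewrite -(card_subsets_containing x) mulnC -sum_nat_const; apply: eq_bigl => A.
by rewrite inE.
Qed.

Lemma free_enum (K : fieldType) (vT : vectType K) (I : finType) (P : {pred I})
    (g : I -> vT) :
  (forall c : I -> K, \sum_(p in P) c p *: g p = 0 -> {in P, forall p, c p = 0}) ->
  free [seq g p | p <- enum P].
Proof.
move=> coef_eq0; set r := enum P.
have -> : [seq g p | p <- r] = map_tuple g (in_tuple r) by [].
apply/freeP => kk sum_eq0 j.
pose c (p : I) := if insub (index p r) is Some j' then kk j' else 0.
have cE j' : c (tnth (in_tuple r) j') = kk j'.
  rewrite /c (tnth_nth (tnth (in_tuple r) j')) /= index_uniq ?enum_uniq //.
  by rewrite insubT // => lt_j'; congr kk; apply: val_inj.
rewrite -cE; apply: coef_eq0; last by rewrite -mem_enum mem_tnth.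
rewrite -[RHS]sum_eq0 -big_enum big_tnth; apply: eq_bigr => j' _.
by rewrite cE -tnth_nth tnth_map.
Qed.

Fact pchar2_F2 : 2 \in [pchar 'F_2].
Proof. exact: pchar_Fp. Qed.

(* Indexing the blocks by ['I_n.+1] provides the default block [ord0] needed to
   define [blk] and [pivot]; the case without blocks is trivial. *)
Section Blocks.
Variables (n : nat) (k : 'I_n.+1 -> nat).
Local Notation m := (msum k).

Definition block_start (h : 'I_n.+1) := (\sum_(l < n.+1 | (l < h)%N) k l)%N.
Definition block_end (h : 'I_n.+1) := (\sum_(l < n.+1 | (l <= h)%N) k l)%N.

Lemma in_block h (y : 'I_m) :
  (y \in block k h) = (block_start h <= y < block_end h)%N.
Proof. by rewrite inE. Qed.

Lemma block_endE h : block_end h = (block_start h + k h)%N.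
Proof.
rewrite /block_end (bigD1 h) //= addnC; congr (_ + _)%N.
by apply: eq_bigl => l; rewrite ltn_neqAle andbC.
Qed.

Lemma block_end_le_start (h1 h2 : 'I_n.+1) :
  (h1 < h2)%N -> (block_end h1 <= block_start h2)%N.
Proof.
move=> lt12; rewrite /block_start (bigID (fun l : 'I_n.+1 => (l <= h1)%N)) /=.
apply: leq_trans (leq_addr _ _); apply/eq_leq/eq_bigl => l.
by case: (leqP l h1) => le1; rewrite ?andbF ?andbT // (leq_ltn_trans le1 lt12).
Qed.

Lemma block_end_max : block_end ord_max = m.
Proof. by apply: eq_bigl => l; rewrite -ltnS ltn_ord. Qed.

Lemma block_end_le_msum h : (block_end h <= m)%N.
Proof. by rewrite /msum (bigID (fun l : 'I_n.+1 => (l <= h)%N)) leq_addr. Qed.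

Lemma mem_block_eq h1 h2 (y : 'I_m) :
  y \in block k h1 -> y \in block k h2 -> h1 = h2.
Proof.
rewrite !in_block => /andP[ge1 lt1] /andP[ge2 lt2].
case: (ltngtP h1 h2) => [lt12|lt21|/val_inj //].
- by have := block_end_le_start lt12; lia.
- by have := block_end_le_start lt21; lia.
Qed.

Definition blk (y : 'I_m) : 'I_n.+1 :=
  [arg max_(h > ord0 | (block_start h <= y)%N) h].

Lemma blk_block y : y \in block k (blk y).
Proof.
rewrite in_block /blk; case: arg_maxnP => [|h start_le h_max].
  by rewrite /block_start big_pred0.
rewrite start_le /=; case: (ltnP h n) => [lt_hn | le_nh].
  rewrite ltnNge; apply/negP => end_le.
  suff : (h < h)%N by rewrite ltnn.
  apply: (h_max (Ordinal (lt_hn : (h.+1 < n.+1)%N))).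
  by apply: leq_trans end_le; apply/eq_leq/eq_bigl => l /=; rewrite ltnS.
have -> : h = ord_max by apply/val_inj/anti_leq; rewrite le_nh -ltnS ltn_ord.
by rewrite block_end_max.
Qed.

Lemma mem_block h y : (y \in block k h) = (blk y == h).
Proof.
apply/idP/eqP => [yh | <-]; last exact: blk_block.
exact: mem_block_eq (blk_block y) yh.
Qed.

Lemma card_block h : #|block k h| = k h.
Proof.
rewrite -sum1_card (eq_bigl (fun j : 'I_m => block_start h <= j < block_end h)%N);
  last by move=> j; rewrite in_block.
rewrite -(big_ord_widen_cond _ (fun j => block_start h <= j)%N (fun _ => 1%N)
           (block_end_le_msum h)).
rewrite -(big_geq_mkord (block_start h) (block_end h) xpredT (fun _ => 1%N)).
by rewrite sum_nat_const_nat block_endE; lia.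
Qed.

Hypothesis k_gt0 : forall l, (0 < k l)%N.

Lemma block_start_lt_msum h : (block_start h < m)%N.
Proof. by have := block_end_le_msum h; rewrite block_endE; have := k_gt0 h; lia. Qed.

Definition block_min h : 'I_m := Ordinal (block_start_lt_msum h).

Lemma blk_block_min h : blk (block_min h) = h.
Proof.
by apply/eqP; rewrite -mem_block in_block block_endE /= leqnn /=; have := k_gt0 h; lia.
Qed.

End Blocks.

Section Arrangements.
Variables (n i : nat) (k : 'I_n -> nat).
Local Notation m := (msum k).
Local Notation arr := {ffun 'I_i -> 'I_n}.

Definition arrangement (A : {set 'I_n}) (sigma : arr) :=
  injectiveb sigma && ([set sigma s | s : 'I_i] == A).

Definition late (x : 'I_n) (sigma : arr) :=
  [exists s : 'I_i, (sigma s == x) && (i.-2 <= s)%N].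

Definition hole (x : 'I_n) (sigma : arr) : {ffun 'I_i -> option 'I_n} :=
  [ffun s => if sigma s == x then None else Some (sigma s)].

Definition fill (x : 'I_n) (tau : {ffun 'I_i -> option 'I_n}) : arr :=
  [ffun s => odflt x (tau s)].

Lemma fill_hole x : cancel (hole x) (fill x).
Proof. by move=> sigma; apply/ffunP => s; rewrite !ffunE; case: eqP. Qed.

Lemma injectiveb_hole x sigma : injectiveb (hole x sigma) = injectiveb sigma.
Proof.
apply/injectiveP/injectiveP => inj s1 s2 => [e|]; first by apply: inj; rewrite !ffunE e.
rewrite !ffunE; case: (sigma s1 =P x) => [e1|_]; case: (sigma s2 =P x) => [e2|_] //.
- by move=> _; apply: inj; rewrite e1 e2.
- by case=> /inj.
Qed.

Lemma mem_imset_hole x sigma (o : option 'I_n) :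
  (o \in [set hole x sigma s | s : 'I_i]) =
  if o is Some a then (a != x) && (a \in [set sigma s | s : 'I_i])
  else x \in [set sigma s | s : 'I_i].
Proof.
apply/imsetP/idP => [[s _ ->]|]; rewrite ?ffunE.
  case: eqP => [<-|/eqP ->]; by rewrite imset_f.
case: o => [a /andP[ax /imsetP[s _ e]]|/imsetP[s _ e]]; exists s; rewrite // ffunE.
  by rewrite -e (negPf ax).
by rewrite -e eqxx.
Qed.

Lemma good_tau_hole (A : {set 'I_n}) x sigma :
  x \in A -> good_tau A x (hole x sigma) = arrangement A sigma && late x sigma.
Proof.
move=> xA; rewrite /good_tau /arrangement injectiveb_hole.
case: injectiveP => [inj|] //=.
have image_hole : ([set hole x sigma s | s : 'I_i] == None |: (Some @: (A :\ x))) =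
                  ([set sigma s | s : 'I_i] == A).
  apply/eqP/eqP => [E|im_sigma].
    apply/setP => a; case: (eqVneq a x) => [->|ax].
      by have := mem_imset_hole x sigma None; rewrite E xA !inE eqxx => <-.
    have := mem_imset_hole x sigma (Some a).
    by rewrite E !inE (mem_imset _ _ (@Some_inj _)) !inE ax => /esym.
  apply/setP => o; rewrite mem_imset_hole im_sigma !inE.
  case: o => [a|]; last by rewrite eqxx xA.
  by rewrite /= mem_imset ?inE //; apply: Some_inj.
rewrite image_hole; case: eqP => [im_sigma|] //=.
have /imsetP[s0 _ sigma_s0] : x \in [set sigma s | s : 'I_i] by rewrite im_sigma.
rewrite /late; apply/forallP/existsP => [late_hole | [s /andP[/eqP sigma_s le_s]] s'].
  by exists s0; have := late_hole s0; rewrite ffunE -sigma_s0 !eqxx.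
rewrite ffunE; case: (sigma s' =P x) => //= sigma_s'.
by have -> : s' = s by apply: inj; rewrite sigma_s sigma_s'.
Qed.

Lemma hole_fill (A : {set 'I_n}) x tau : good_tau A x tau -> hole x (fill x tau) = tau.
Proof.
case/and3P => _ /eqP im_tau _; apply/ffunP => s; rewrite !ffunE.
have : tau s \in [set tau p | p : 'I_i] by rewrite imset_f.
rewrite im_tau !inE; case: (tau s) => [a|] /=; last by rewrite eqxx.
by rewrite (mem_imset _ _ (@Some_inj _)) !inE => /andP[/negPf ->].
Qed.

Lemma phi_tildeE (A : {set 'I_n}) x (T : {set 'I_m}) sg : x \in A ->
  phi_tilde k i A x T sg =
  \sum_(sigma | arrangement A sigma && late x sigma)
     \prod_(s < i) chiS (if sigma s == x then T else block k (sigma s)) (sg s).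
Proof.
move=> xA; rewrite ffunE (reindex_onto (hole x) (fill x) (@hole_fill A x)).
apply: eq_big => [sigma | sigma _]; first by rewrite fill_hole eqxx andbT good_tau_hole.
by apply: eq_bigr => s _; rewrite ffunE; case: eqP.
Qed.

Lemma chiS_sum1 (B : {set 'I_m}) v : chiS B v = \sum_(y in B) chiS [set y] v.
Proof. by apply: eq_bigr => y _; rewrite /chiS big_set1. Qed.

Lemma phi_tilde_sum1 (A : {set 'I_n}) x (T : {set 'I_m}) : x \in A ->
  phi_tilde k i A x T = \sum_(y in T) phi_tilde k i A x [set y].
Proof.
move=> xA; apply/ffunP => sg; rewrite sum_ffunE phi_tildeE //.
under [RHS]eq_bigr => y _ do rewrite phi_tildeE //.
rewrite exchange_big /=; apply: eq_bigr => sigma.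
case/andP => /andP[/injectiveP inj _] /existsP[s0 /andP[/eqP sigma_s0 _]].
have split_s0 T' :
    \prod_(s < i) chiS (if sigma s == x then T' else block k (sigma s)) (sg s) =
    chiS T' (sg s0) * \prod_(s < i | s != s0) chiS (block k (sigma s)) (sg s).
  rewrite (bigD1 s0) //= sigma_s0 eqxx; congr (_ * _); apply: eq_bigr => s ne_s.
  by rewrite -sigma_s0 (inj_eq inj) (negPf ne_s).
by rewrite split_s0 (chiS_sum1 T) mulr_suml; apply: eq_bigr => y _; rewrite split_s0.
Qed.

End Arrangements.

Section BlockRelation.
Variables (n i : nat) (k : 'I_n -> nat).

Lemma inord_neq_max : inord i != ord_max :> 'I_i.+2.
Proof. by rewrite -val_eqE /= inordK // neq_ltn ltnSn. Qed.

Lemma late_last_two (sigma : {ffun 'I_i.+2 -> 'I_n}) x :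
  late x sigma = (x == sigma (inord i)) || (x == sigma ord_max).
Proof.
have val_inord : (inord i : 'I_i.+2) = i :> nat by rewrite inordK.
apply/existsP/orP => [[s /andP[/eqP <- le_is]] | [] /eqP ->].
- have : (s == inord i) || (s == ord_max).
    by rewrite -!val_eqE /= val_inord; have := ltn_ord s; lia.
  by case/orP => /eqP ->; [left | right].
- by exists (inord i); rewrite eqxx val_inord /=.
- by exists ord_max; rewrite eqxx /=.
Qed.

(* Each arrangement of [A] is counted once for each of its last two values. *)
Lemma sum_phi_tilde_block (A : {set 'I_n}) :
  \sum_(x in A) phi_tilde k i.+2 A x (block k x) = 0.
Proof.
apply/ffunP => sg; rewrite sum_ffunE [RHS]ffunE.
pose G (sigma : {ffun 'I_i.+2 -> 'I_n}) :=
  \prod_(s < i.+2) chiS (block k (sigma s)) (sg s).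
rewrite (eq_bigr (fun x => \sum_(sigma | arrangement A sigma && late x sigma) G sigma));
  last first.
  move=> x xA; rewrite phi_tildeE //; apply: eq_bigr => sigma _.
  by apply: eq_bigr => s _; case: eqP => [->|].
rewrite (exchange_big_dep (arrangement A)) /=; last by move=> x sigma _ /andP[].
rewrite big1 // => sigma arr_sigma; have [/injectiveP inj /eqP im_sigma] := andP arr_sigma.
rewrite (eq_bigl (fun x => x \in [set sigma (inord i); sigma ord_max])) => [|x]; last first.
  rewrite arr_sigma late_last_two in_set2 andb_idl // => /orP[] /eqP ->;
  by rewrite -im_sigma imset_f.
by rewrite sumr_const cards2 (inj_eq inj) inord_neq_max (mulrn_pchar pchar2_F2).
Qed.

End BlockRelation.

Lemma chiS_delta m (B : {set 'I_m}) y : chiS B (delta_mx 0 y) = (y \in B)%:R.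
Proof.
rewrite /chiS (eq_bigr (fun j => (j == y)%:R)) => [|j _]; last by rewrite mxE eqxx eq_sym.
case: (boolP (y \in B)) => yB; last by rewrite big1 // => j jB; case: eqP jB yB => // ->->.
by rewrite (bigD1 y) //= eqxx big1 ?addr0 // => j /andP[_ /negPf ->].
Qed.

Section Basis.
Variables (n i : nat) (k : 'I_n.+1 -> nat).
Hypothesis k_gt0 : forall l, (0 < k l)%N.
Local Notation m := (msum k).

Definition blocks_over (A : {set 'I_n.+1}) : {set 'I_m} := [set y | blk y \in A].

Definition pivot (A : {set 'I_n.+1}) : 'I_n.+1 := odflt ord0 [pick x in A].

Definition pivot_point (A : {set 'I_n.+1}) : 'I_m := block_min k_gt0 (pivot A).

Definition phi_point (p : {set 'I_n.+1} * 'I_m) : mlmap m i.+2 :=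
  phi_tilde k i.+2 p.1 (blk p.2) [set p.2].

Definition basis_index : {set {set 'I_n.+1} * 'I_m} :=
  [set p : {set 'I_n.+1} * 'I_m |
     (#|p.1| == i.+2) && (p.2 \in blocks_over p.1 :\ pivot_point p.1)].

Definition gov_basis := [seq phi_point p | p <- enum basis_index].

Lemma pivot_in (A : {set 'I_n.+1}) : #|A| = i.+2 -> pivot A \in A.
Proof. by rewrite /pivot; case: pickP => // /eq_card0 ->. Qed.

Lemma blk_pivot_point (A : {set 'I_n.+1}) : blk (pivot_point A) = pivot A.
Proof. exact: blk_block_min. Qed.

Lemma sum_phi_point_blocks_over (A : {set 'I_n.+1}) :
  \sum_(y in blocks_over A) phi_point (A, y) = 0.
Proof.
rewrite -[RHS](sum_phi_tilde_block i k A).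
rewrite (partition_big (@blk n k) (mem A)) => [|y]; last by rewrite inE.
apply: eq_bigr => x xA; rewrite phi_tilde_sum1 //.
apply: eq_big => [y | y /andP[_ /eqP <-] //].
by rewrite inE mem_block andb_idl // => /eqP->.
Qed.

Lemma phi_point_in_span (A : {set 'I_n.+1}) (y : 'I_m) :
  #|A| = i.+2 -> blk y \in A -> phi_point (A, y) \in <<gov_basis>>%VS.
Proof.
move=> cardA yA.
have in_basis y' :
    blk y' \in A -> y' != pivot_point A -> phi_point (A, y') \in <<gov_basis>>%VS.
  move=> y'A y'_ne; apply/memv_span/map_f.
  by rewrite mem_enum inE /= cardA eqxx in_setD1 y'_ne inE.
have [->|] := eqVneq y (pivot_point A); last exact: in_basis.
have := sum_phi_point_blocks_over A; rewrite (bigD1 (pivot_point A)) /=; last first.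
  by rewrite inE blk_pivot_point pivot_in.
move/eqP; rewrite addr_eq0 => /eqP ->; rewrite rpredN rpred_sum // => y' /andP[].
by rewrite inE; apply: in_basis.
Qed.

Lemma Gov_tildeE : Gov_tilde k i.+2 = <<gov_basis>>%VS.
Proof.
apply/eqP; rewrite eqEsubv; apply/andP; split.
  apply/subv_sumP => A /eqP cardA; apply/subv_sumP => x xA.
  apply/subv_sumP => T /subsetP sTx; rewrite -memvE phi_tilde_sum1 //.
  apply: rpred_sum => y /sTx; rewrite mem_block => /eqP blk_y.
  by rewrite -blk_y; apply: phi_point_in_span; rewrite ?blk_y.
apply/span_subvP => _ /mapP[[A y] + ->]; rewrite memvE mem_enum inE /= in_setD1 inE.
case/and3P=> /eqP cardA _ yA.
apply: (sumv_sup A) => //; first by rewrite cardA.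
apply: (sumv_sup (blk y)) => //; apply: (sumv_sup [set y]); last exact: subvv.
by rewrite sub1set mem_block.
Qed.

Definition unit_tuple (z : {ffun 'I_i.+2 -> 'I_m}) : {ffun 'I_i.+2 -> 'rV['F_2]_m} :=
  [ffun s => delta_mx 0 (z s)].

Lemma prod_chiS_unit_tuple (z : {ffun 'I_i.+2 -> 'I_m}) (B : 'I_i.+2 -> {set 'I_m}) :
  \prod_(s < i.+2) chiS (B s) (unit_tuple z s) = [forall s, z s \in B s]%:R.
Proof.
under eq_bigr do rewrite ffunE chiS_delta.
case: (boolP [forall s, _]) => [/forallP all_in | /forallPn[s /negPf s_out]]; last first.
  by rewrite (bigD1 s) //= s_out mul0r.
by rewrite big1 // => s _; rewrite all_in.
Qed.

Lemma phi_point_unit_tuple (z : {ffun 'I_i.+2 -> 'I_m}) (A : {set 'I_n.+1})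
    (y : 'I_m) :
  injective (fun s => blk (z s)) -> blk y \in A ->
  phi_point (A, y) (unit_tuple z) =
    ((A == [set blk (z s) | s : 'I_i.+2]) && late y z)%:R.
Proof.
move=> bz_inj yA; pose bz := [ffun s => blk (z s)].
have fits_at (sigma : {ffun 'I_i.+2 -> 'I_n.+1}) s :
    (z s \in if sigma s == blk y then [set y] else block k (sigma s)) =
    (sigma s == bz s) && ((bz s == blk y) ==> (z s == y)).
  rewrite ffunE; case: (sigma s =P blk y) => [-> | /eqP ne_y].
    rewrite in_set1; case: (z s =P y) => [->|_]; first by rewrite !eqxx.
    by rewrite implybF eq_sym andbN.
  by rewrite mem_block eq_sym; case: eqP => // <-; rewrite (negPf ne_y).
have fits_all (sigma : {ffun 'I_i.+2 -> 'I_n.+1}) :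
    [forall s, z s \in if sigma s == blk y then [set y] else block k (sigma s)] =
    (sigma == bz) && [forall s, (bz s == blk y) ==> (z s == y)].
  apply/forallP/andP => [fits | [/eqP -> fits] s]; last first.
    by rewrite fits_at eqxx (forallP fits).
  have {}fits s : (sigma s == bz s) && ((bz s == blk y) ==> (z s == y)) by rewrite -fits_at.
  split; first by apply/eqP/ffunP => s; have /andP[/eqP] := fits s.
  by apply/forallP => s; have /andP[] := fits s.
have arr_bz : arrangement A bz = (A == [set blk (z s) | s : 'I_i.+2]).
  rewrite /arrangement.
  have -> : injectiveb bz by apply/injectiveP => s1 s2; rewrite !ffunE => /bz_inj.
  by rewrite eq_sym (eq_imset _ (ffunE _)).
have late_bz :
    late (blk y) bz && [forall s, (bz s == blk y) ==> (z s == y)] = late y z.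
  apply/andP/existsP => [[/existsP[s /andP[bz_s le_s]] /forallP fits] |
                         [s /andP[/eqP z_s le_s]]].
    by exists s; rewrite le_s andbT; have := fits s; rewrite bz_s.
  split; first by apply/existsP; exists s; rewrite ffunE z_s eqxx.
  by apply/forallP => s'; rewrite !ffunE -z_s; apply/implyP => /eqP/bz_inj ->.
rewrite /phi_point phi_tildeE //=.
under eq_bigr do rewrite prod_chiS_unit_tuple fits_all.
rewrite big_mkcond (bigD1 bz) //= eqxx big1 ?addr0 => [|sigma /negPf ->]; last by case: ifP.
by rewrite arr_bz -late_bz andbA; case: ifP.
Qed.

Lemma exists_test_tuple (A : {set 'I_n.+1}) (u v : 'I_m) :
  #|A| = i.+2 -> blk u \in A -> blk v \in A -> blk u != blk v ->
  exists z, forall (A' : {set 'I_n.+1}) (y : 'I_m), blk y \in A' ->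
    phi_point (A', y) (unit_tuple z) = ((A' == A) && ((y == u) || (y == v)))%:R.
Proof.
move=> cardA uA vA uv; have ne_last := inord_neq_max i.
have [f f_inj [f_im fa fb]] := exists_ord_bijection2 cardA uA vA uv ne_last.
pose z := [ffun s => if s == inord i then u
                     else if s == ord_max then v else block_min k_gt0 (f s)].
have blk_z s : blk (z s) = f s.
  rewrite ffunE; case: eqP => [->|_]; first by rewrite fa.
  by case: eqP => [->|_]; rewrite ?fb ?blk_block_min.
exists z => A' y yA'; rewrite phi_point_unit_tuple //; last first.
  by move=> s1 s2; rewrite !blk_z => /f_inj.
by rewrite (eq_imset _ blk_z) f_im late_last_two !ffunE eqxx (ifN_eqC _ _ ne_last) eqxx.
Qed.

Lemma basis_coef_eq0 (c : {set 'I_n.+1} * 'I_m -> 'F_2) :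
  \sum_(p in basis_index) c p *: phi_point p = 0 -> {in basis_index, forall p, c p = 0}.
Proof.
move=> sum_eq0; pose c' p := if p \in basis_index then c p else 0.
have sum_c'_delta q : \sum_p c' p * (p == q)%:R = c' q.
  by under eq_bigr do rewrite mulr_natr mulrb; rewrite -big_mkcond big_pred1_eq.
have c'_eq (A : {set 'I_n.+1}) (u v : 'I_m) :
    #|A| = i.+2 -> blk u \in A -> blk v \in A -> blk u != blk v ->
    c' (A, u) = c' (A, v).
  move=> cardA uA vA uv; have [z eval_z] := exists_test_tuple cardA uA vA uv.
  have ne_uv : u != v by apply: contraNneq uv => ->.
  have := congr1 (fun f : mlmap m i.+2 => f (unit_tuple z)) sum_eq0.
  rewrite sum_ffunE ffunE big_mkcond => sum_z.
  apply/eqP; rewrite -subr_eq0 (oppr_pchar2 pchar2_F2) -!sum_c'_delta -big_split /=.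
  apply/eqP; rewrite -[RHS]sum_z; apply: eq_bigr => -[A' y] _.
  rewrite /c' -mulrDr; case: ifP => [|_]; last by rewrite mul0r.
  rewrite inE /= in_setD1 inE => /and3P[_ _ yA'].
  rewrite ffunE eval_z // !xpair_eqE -natrD; congr (_ * _%:R).
  by case: (A' == A); case: (y =P u) => [->|]; rewrite ?(negPf ne_uv).
case=> A y; rewrite inE /= in_setD1 inE => /and3P[/eqP cardA y_ne yA].
have c_c' : c (A, y) = c' (A, y) by rewrite /c' inE /= cardA eqxx in_setD1 y_ne inE yA.
have c'_pivot : c' (A, pivot_point A) = 0 by rewrite /c' inE /= in_setD1 eqxx andbF.
have pivotA := pivot_in cardA.
rewrite c_c'; have [blk_y | ne_y] := eqVneq (blk y) (pivot A); last first.
  by rewrite (c'_eq A y (pivot_point A)) ?blk_pivot_point.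
(* A second block of [A] links the pivot block to the others. *)
have := cardsD1 (pivot A) A; rewrite pivotA cardA add1n => -[card_rest].
have /set0Pn[x] : A :\ pivot A != set0 by rewrite -card_gt0 -card_rest.
rewrite in_setD1 => /andP[x_ne xA]; have blk_x := blk_block_min k_gt0 x.
rewrite (c'_eq A y (block_min k_gt0 x)) ?blk_y ?blk_x 1?eq_sym //.
by rewrite (c'_eq A _ (pivot_point A)) ?blk_x ?blk_pivot_point.
Qed.

Lemma dim_Gov_tilde : \dim (Gov_tilde k i.+2) = #|basis_index|.
Proof. by rewrite Gov_tildeE (eqP (free_enum basis_coef_eq0)) size_map -cardE. Qed.

Lemma card_blocks_over (A : {set 'I_n.+1}) : #|blocks_over A| = (\sum_(x in A) k x)%N.
Proof.
rewrite -sum1_card (partition_big (@blk n k) (mem A)) => [|y]; last by rewrite inE.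
apply: eq_bigr => x xA; rewrite -card_block -sum1_card; apply: eq_bigl => y.
by rewrite inE mem_block andb_idl // => /eqP ->.
Qed.

Lemma card_basis_index :
  (#|basis_index| + 'C(n.+1, i.+2) = msum k * 'C(n, i.+1))%N.
Proof.
have -> : #|basis_index| =
    (\sum_(A : {set 'I_n.+1} | #|A| == i.+2) #|blocks_over A :\ pivot_point A|)%N.
  under [RHS]eq_bigr do rewrite -sum1_card.
  by rewrite pair_big_dep /= -sum1_card; apply: eq_bigl => -[A y]; rewrite inE.
have := card_draws 'I_n.+1 i.+2; rewrite card_ord => <-.
have := sum_subsets_weight k i.+1; rewrite card_ord => <-.
rewrite -sum1dep_card -big_split /=; apply: eq_bigr => A /eqP cardA.
rewrite addn1 -card_blocks_over (cardsD1 (pivot_point A) (blocks_over A)).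
by rewrite inE blk_pivot_point pivot_in.
Qed.

End Basis.

Theorem proposition2p6 (n : nat) (k : 'I_n -> nat) (i : nat) :
  (forall l : 'I_n, (0 < k l)%N) -> (2 <= i)%N ->
  (\dim (Gov_tilde k i))%:Z =
    ((msum k * 'C(n.-1, i.-1))%:Z - ('C(n, i))%:Z)%R.
Proof.
move=> k_gt0; case: i => [|[|i]] // _; case: n k k_gt0 => [|n] k k_gt0.
  rewrite /Gov_tilde big_pred0 ?dimv0 ?bin0n ?muln0 // => A.
  by apply: contraTF (max_card A) => /eqP ->; rewrite card_ord.
by rewrite (dim_Gov_tilde i k_gt0) -(card_basis_index i k_gt0) PoszD addrK.
Qed.
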